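(* Let $\vec\kappa=(\kappa_0,\kappa_1,\kappa_\infty,\theta_1,\ldots,\theta_N)$ and $R_\tau(\vec\kappa)=(1-\kappa_0,1-\kappa_1,-\kappa_\infty,-\theta_1,\ldots,-\theta_N)$. Define the birational transformation $R_\tau:(q,p)\mapsto(Q,P)$ by $$Q_i=\frac{s_ip_i(q_ip_i-\theta_i)}{(\alpha+\sum_jq_jp_j)(\alpha+\kappa_\infty+\sum_jq_jp_j)},\qquad Q_iP_i=-q_ip_i\quad(i=1,\dots,N),$$ with $\alpha=\alpha(\vec\kappa)$, and put $\widetilde H_i=H_i(q,p,s;\vec\kappa)-\dfrac{q_ip_i}{s_i}$. Then (i) $\sum_i\big(dp_i\wedge dq_i-dH_i\wedge ds_i\big)=\sum_i\big(dP_i\wedge dQ_i-d\widetilde H_i\wedge ds_i\big)$ as 2-forms in the variables $(q,p,s)$, where $H_i=H_i(q,p,s;\vec\kappa)$; (ii) $\widetilde H_i=H_i(Q,P,s;R_\tau(\vec\kappa))$ for $i=1,\dots,N$. Thus $R_\tau$ is a birational canonical transformation from $\mathcal H_N(q,p,s,H;\vec\kappa)$ to $\mathcal H_N(Q,P,s,\widetilde H;R_\tau(\vec\kappa))$, and in particular it maps solutions of $\mathcal H_N(\vec\kappa)$ to solutions of $\mathcal H_N(R_\tau(\vec\kappa))$.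
   Context: For $\vec\kappa=(\kappa_0,\kappa_1,\kappa_\infty,\theta_1,\ldots,\theta_N)\in\mathbb C^{N+3}$ put $\alpha=\alpha(\vec\kappa)=-\frac12(\kappa_0+\kappa_1+\kappa_\infty+\sum_{i=1}^N\theta_i-1)$, $R_{ij}=s_i(s_j-1)/(s_j-s_i)$, $S_{ij}=s_i(s_i-1)/(s_i-s_j)$. Define $H_i=H_i(q,p,s;\vec\kappa)$, $i=1,\dots,N$, by $s_i(s_i-1)H_i=q_i(\alpha+\sum_j q_jp_j)(\alpha+\kappa_\infty+\sum_j q_jp_j)+s_ip_i(q_ip_i-\theta_i)-\sum_{j\neq i}R_{ji}(q_jp_j-\theta_j)q_ip_j-\sum_{j\neq i}S_{ij}(q_ip_i-\theta_i)q_jp_i-\sum_{j\neq i}R_{ij}q_jp_j(q_ip_i-\theta_i)-\sum_{j\neq i}R_{ij}q_ip_i(q_jp_j-\theta_j)-(s_i+1)(q_ip_i-\theta_i)q_ip_i+(\kappa_1s_i+\kappa_0-1)q_ip_i$, where $\sum_j$ runs over $j=1,\dots,N$ and $\sum_{j\ne i}$ omits $j=i$. The Garnier system $\mathcal H_N(\vec\kappa)$ is the Hamiltonian system $\partial q_i/\partial s_j=\partial H_j/\partial p_i$, $\partial p_i/\partial s_j=-\partial H_j/\partial q_i$ ($i,j=1,\dots,N$) for functions $q_i(s),p_i(s)$ of $s=(s_1,\dots,s_N)$. *)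

From HB Require Import structures.
From mathcomp Require Import all_boot all_order all_algebra.
From mathcomp Require Import all_classical all_reals topology normedtype derive.
From mathcomp Require Export complex.
Set Implicit Arguments.
Unset Strict Implicit.
Unset Printing Implicit Defensive.
Import Order.TTheory GRing.Theory Num.Theory.
Import numFieldNormedType.Exports.
Local Open Scope ring_scope.

Section Garnier.
Variables (K : fieldType) (N : nat).
Variables (k0 k1 kinf : K) (th : 'I_N -> K).

Definition galpha : K := - (2%:R^-1 * (k0 + k1 + kinf + \sum_(i < N) th i - 1)).

Variables (q p s : 'I_N -> K).

Definition sqp : K := \sum_(j < N) q j * p j.

Definition Rg (i j : 'I_N) : K := s i * (s j - 1) / (s j - s i).
Definition Sg (i j : 'I_N) : K := s i * (s i - 1) / (s i - s j).

Definition hnum (i : 'I_N) : K :=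
  q i * (galpha + sqp) * (galpha + kinf + sqp)
  + s i * p i * (q i * p i - th i)
  - \sum_(j < N | j != i) Rg j i * (q j * p j - th j) * q i * p j
  - \sum_(j < N | j != i) Sg i j * (q i * p i - th i) * q j * p i
  - \sum_(j < N | j != i) Rg i j * q j * p j * (q i * p i - th i)
  - \sum_(j < N | j != i) Rg i j * q i * p i * (q j * p j - th j)
  - (s i + 1) * (q i * p i - th i) * q i * p i
  + (k1 * s i + k0 - 1) * q i * p i.

Definition Ham (i : 'I_N) : K := hnum i / (s i * (s i - 1)).

Definition Qtau (i : 'I_N) : K :=
  s i * p i * (q i * p i - th i) / ((galpha + sqp) * (galpha + kinf + sqp)).
Definition Ptau (i : 'I_N) : K := - (q i * p i) / Qtau i.

Definition Htilde (i : 'I_N) : K := Ham i - q i * p i / s i.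
End Garnier.

(* Points of the (q,p,s)-space: x c j, with c = 0 (q), 1 (p), 2 (s). *)
Definition cq : 'I_3 := @Ordinal 3 0 isT.
Definition cp : 'I_3 := @Ordinal 3 1 isT.
Definition cs : 'I_3 := @Ordinal 3 2 isT.

Section Forms.
Variables (K : numFieldType) (N : nat).
Definition pt := 'I_3 -> 'I_N -> K.

Definition xq (x : pt) : 'I_N -> K := x cq.
Definition xp (x : pt) : 'I_N -> K := x cp.
Definition xs (x : pt) : 'I_N -> K := x cs.

Definition upd (x : pt) (c : 'I_3) (j : 'I_N) (t : K) : pt :=
  fun c' j' => if (c' == c) && (j' == j) then t else x c' j'.

Definition partial (F : pt -> K) (c : 'I_3) (j : 'I_N) (x : pt) : K :=
  derive1 (fun t : K^o => (F (upd x c j t) : K^o)) (x c j).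

(* (dF /\ dG) evaluated on the coordinate vectors e_(c,j), e_(d,k), at x *)
Definition wedge (F G : pt -> K) (c : 'I_3) (j : 'I_N) (d : 'I_3) (k : 'I_N)
    (x : pt) : K :=
  partial F c j x * partial G d k x - partial F d k x * partial G c j x.
End Forms.

From HB Require Import structures.
From mathcomp Require Import all_boot all_order all_algebra.
From mathcomp Require Import all_classical all_reals topology normedtype derive.
From mathcomp Require Import complex ring.
Import Order.TTheory GRing.Theory Num.Theory.
Import numFieldNormedType.Exports.
Local Open Scope ring_scope.
Set Implicit Arguments.
Unset Strict Implicit.

(* Write u_i = q_i p_i, S = sum_i u_i and H~_i = H_i - u_i / s_i.
   (i) Since P_i = - u_i / Q_i, one has dP_i /\ dQ_i = - du_i /\ dlog Q_i, and
   dlog Q_i = ds_i/s_i + dp_i/p_i + du_i/(u_i - th_i) - c dS with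
   c = 1/(alpha + S) + 1/(alpha + kinf + S).  Since du_i /\ dp_i / p_i = dq_i /\ dp_i
   and du_i /\ ds_i / s_i = d(u_i/s_i) /\ ds_i, this gives
   dP_i /\ dQ_i - dH~_i /\ ds_i = dp_i /\ dq_i - dH_i /\ ds_i + c du_i /\ dS,
   and the last terms add up to c dS /\ dS = 0.
   (ii) As Q_i P_i = - u_i, both alpha and S change sign under R_tau.  In
   s_i (s_i - 1) H_i the first two terms are exchanged, and so are the first two
   sums (because s_i R_ji = s_j S_ij); the only other change is in the term
   linear in kappa, by - (s_i - 1) u_i. *)

Section PartialDerivatives.
Variables (K : numFieldType) (N : nat) (x : pt K N) (c : 'I_3) (j : 'I_N).

Definition is_partial (F : pt K N -> K) (dF : K) :=
  is_derive (x c j : K^o) 1 (fun t : K^o => F (upd x c j t) : K^o) dF.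

Lemma upd_id : upd x c j (x c j) = x.
Proof.
apply/funext => c'; apply/funext => j'; rewrite /upd.
by case: eqP => [->|] //=; case: eqP => [->|].
Qed.

Lemma is_partial_val F dF : is_partial F dF -> partial F c j x = dF.
Proof. by case=> _ <-; rewrite /partial derive1E. Qed.

Lemma is_partial_ext F G dF : F =1 G -> is_partial F dF -> is_partial G dF.
Proof. by move=> /funext <-. Qed.

Lemma is_partial_eq F dF dF' : is_partial F dF -> dF = dF' -> is_partial F dF'.
Proof. by move=> dFx <-. Qed.

Lemma is_partial_cst a : is_partial (fun => a) 0.
Proof. exact: is_derive_cst. Qed.

Lemma is_partial_coord d k :
  is_partial (fun y => y d k) (partial (fun y => y d k) c j x).
Proof.
have dF : derivable (fun t : K^o => upd x c j t d k : K^o) (x c j) 1.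
  by rewrite /upd; case: (_ && _); [exact: derivable_id | exact: derivable_cst].
by split=> //; rewrite /partial derive1E.
Qed.

Lemma is_partial_xq i : is_partial (fun y => xq y i) (partial (fun y => xq y i) c j x).
Proof. exact: is_partial_coord. Qed.

Lemma is_partial_xp i : is_partial (fun y => xp y i) (partial (fun y => xp y i) c j x).
Proof. exact: is_partial_coord. Qed.

Lemma is_partial_xs i : is_partial (fun y => xs y i) (partial (fun y => xs y i) c j x).
Proof. exact: is_partial_coord. Qed.

Lemma is_partialD F G dF dG : is_partial F dF -> is_partial G dG ->
  is_partial (fun y => F y + G y) (dF + dG).
Proof. exact: is_deriveD. Qed.

Lemma is_partialN F dF : is_partial F dF -> is_partial (fun y => - F y) (- dF).
Proof. exact: is_deriveN. Qed.

Lemma is_partialM F G dF dG : is_partial F dF -> is_partial G dG ->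
  is_partial (fun y => F y * G y) (F x * dG + G x * dF).
Proof. by move=> dFx dGx; rewrite -[in F x]upd_id -[in G x]upd_id; exact: is_deriveM. Qed.

Lemma is_partialV F dF : F x != 0 -> is_partial F dF ->
  is_partial (fun y => (F y)^-1) (- dF / F x ^+ 2).
Proof.
move=> Fx0 [dFx <-]; split; first by apply: derivableV; rewrite ?upd_id.
by rewrite deriveV ?upd_id // [RHS]mulrC mulrN -mulNr.
Qed.

Lemma is_partial_sum (I : Type) (r : seq I) (P : pred I) (F : I -> pt K N -> K) dF :
  (forall i, P i -> is_partial (F i) (dF i)) ->
  is_partial (fun y => \sum_(i <- r | P i) F i y) (\sum_(i <- r | P i) dF i).
Proof.
move=> dFi; elim: r => [|a r IH].
  by rewrite big_nil; apply: is_partial_ext (is_partial_cst 0) => y; rewrite big_nil.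
rewrite big_cons; case: ifP => Pa.
  by apply: is_partial_ext (is_partialD (dFi a Pa) IH) => y; rewrite big_cons Pa.
by apply: is_partial_ext IH => y; rewrite big_cons Pa.
Qed.

Lemma is_partial_partial F dF : is_partial F dF -> is_partial F (partial F c j x).
Proof. by move=> dFx; rewrite (is_partial_val dFx). Qed.

Lemma is_partial_qp i : is_partial (fun y => xq y i * xp y i)
  (xq x i * partial (fun y => xp y i) c j x + xp x i * partial (fun y => xq y i) c j x).
Proof. exact: is_partialM (is_partial_xq i) (is_partial_xp i). Qed.

Lemma partial_qp i : partial (fun y => xq y i * xp y i) c j x
  = xq x i * partial (fun y => xp y i) c j x + xp x i * partial (fun y => xq y i) c j x.
Proof. exact: is_partial_val (is_partial_qp i). Qed.

Lemma partial_sqp : partial (fun y => sqp (xq y) (xp y)) c j x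
  = \sum_(i < N) partial (fun y => xq y i * xp y i) c j x.
Proof.
by apply/is_partial_val/is_partial_sum => i _; rewrite partial_qp; exact: is_partial_qp.
Qed.

Lemma is_partial_sqp :
  is_partial (fun y => sqp (xq y) (xp y)) (partial (fun y => sqp (xq y) (xp y)) c j x).
Proof. by apply/is_partial_partial/is_partial_sum => i _; exact: is_partial_qp. Qed.

End PartialDerivatives.

(* [eassumption] lets the caller supply, as hypotheses, the derivatives of
   subterms that should not be unfolded. *)
Ltac is_partial_rules := repeat first
  [ eassumption
  | apply: is_partial_cst
  | apply: is_partial_xq | apply: is_partial_xp | apply: is_partial_xs
  | apply: is_partial_sqp
  | apply: is_partial_sum; intros
  | apply: is_partialD | apply: is_partialN | apply: is_partialM | apply: is_partialV ].

Lemma galpha_Rtau (K : fieldType) (N : nat) (k0 k1 kinf : K) (th : 'I_N -> K) :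
  galpha (1 - k0) (1 - k1) (- kinf) (fun j => - th j) = - galpha k0 k1 kinf th.
Proof. by rewrite /galpha sumrN; ring. Qed.

Lemma Rg_Sg (K : fieldType) (N : nat) (s : 'I_N -> K) i j :
  s j != 0 -> Rg s j i * s i / s j = Sg s i j.
Proof. by move=> sj0; rewrite /Rg /Sg -[RHS]mulr1 -(mulfV sj0); ring. Qed.

Lemma Qtau_neq0 (K : fieldType) (N : nat) (k0 k1 kinf : K) (th q p s : 'I_N -> K) i :
  s i != 0 -> p i != 0 -> q i * p i != th i ->
  galpha k0 k1 kinf th + sqp q p != 0 -> galpha k0 k1 kinf th + kinf + sqp q p != 0 ->
  Qtau k0 k1 kinf th q p s i != 0.
Proof. by move=> *; rewrite /Qtau !mulf_neq0 ?invr_eq0 ?mulf_neq0 ?subr_eq0. Qed.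

Section RtauHamiltonian.
Variables (K : fieldType) (N : nat) (k0 k1 kinf : K) (th q p s : 'I_N -> K).
Hypothesis s_neq0 : forall i, s i != 0.
Hypothesis s_neq1 : forall i, s i != 1.
Hypothesis alpha_neq0 : galpha k0 k1 kinf th + sqp q p != 0.
Hypothesis alpha_kinf_neq0 : galpha k0 k1 kinf th + kinf + sqp q p != 0.
Hypothesis p_neq0 : forall i, p i != 0.
Hypothesis qp_neq_th : forall i, q i * p i != th i.

Local Notation Q := (Qtau k0 k1 kinf th q p s).
Local Notation P := (Ptau k0 k1 kinf th q p s).
Local Notation v i := (q i * p i - th i).

Let v_neq0 i : v i != 0.
Proof. by rewrite subr_eq0. Qed.

Let Q_neq0 i : Q i != 0.
Proof. exact: Qtau_neq0. Qed.

Lemma QtauPtau i : Q i * P i = - (q i * p i).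
Proof. by rewrite /Ptau mulrC -mulrA mulVf ?mulr1 ?Q_neq0. Qed.

Lemma sqp_Rtau : sqp Q P = - sqp q p.
Proof. by rewrite /sqp -sumrN; apply: eq_bigr => j _; rewrite QtauPtau. Qed.

Lemma QtauPtau_cross i j :
  Q i * P j = - (s i * p i * v i) / (s j * p j * v j) * (q j * p j).
Proof.
rewrite /Ptau /Qtau; field.
by rewrite alpha_neq0 alpha_kinf_neq0 s_neq0 p_neq0 v_neq0.
Qed.

Lemma hnum_Rtau i :
  hnum (1 - k0) (1 - k1) (- kinf) (fun j => - th j) Q P s i
  = hnum k0 k1 kinf th q p s i - (s i - 1) * (q i * p i).
Proof.
have vRtau j : Q j * P j - - th j = - v j by rewrite QtauPtau opprB opprK addrC.
have first_sum : \sum_(j < N | j != i) Rg s j i * (Q j * P j - - th j) * Q i * P j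
    = \sum_(j < N | j != i) Sg s i j * v i * q j * p i.
  apply: eq_bigr => j _; rewrite vRtau -mulrA QtauPtau_cross -Rg_Sg ?s_neq0 //.
  by field; rewrite !s_neq0 p_neq0 v_neq0.
have second_sum : \sum_(j < N | j != i) Sg s i j * (Q i * P i - - th i) * Q j * P i
    = \sum_(j < N | j != i) Rg s j i * v j * q i * p j.
  apply: eq_bigr => j _; rewrite vRtau -mulrA QtauPtau_cross -Rg_Sg ?s_neq0 //.
  by field; rewrite !s_neq0 p_neq0 v_neq0.
have third_sum : \sum_(j < N | j != i) Rg s i j * Q j * P j * (Q i * P i - - th i)
    = \sum_(j < N | j != i) Rg s i j * q j * p j * v i.
  by apply: eq_bigr => j _; rewrite vRtau -(mulrA _ (Q j)) QtauPtau; ring.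
have fourth_sum : \sum_(j < N | j != i) Rg s i j * Q i * P i * (Q j * P j - - th j)
    = \sum_(j < N | j != i) Rg s i j * q i * p i * v j.
  by apply: eq_bigr => j _; rewrite vRtau -(mulrA _ (Q i)) QtauPtau; ring.
rewrite /hnum galpha_Rtau sqp_Rtau first_sum second_sum third_sum fourth_sum.
rewrite -!(mulrA _ (Q i)) QtauPtau /Ptau /Qtau.
by field; rewrite alpha_neq0 alpha_kinf_neq0 s_neq0 p_neq0 v_neq0.
Qed.

Lemma Htilde_Rtau i :
  Htilde k0 k1 kinf th q p s i = Ham (1 - k0) (1 - k1) (- kinf) (fun j => - th j) Q P s i.
Proof.
have s1_neq0 : s i - 1 != 0 by rewrite subr_eq0.
by rewrite /Htilde /Ham hnum_Rtau; field; rewrite s1_neq0 s_neq0.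
Qed.
End RtauHamiltonian.

Lemma sum_wedge_sqp (K : numFieldType) (N : nat) (x : pt K N) c j d k :
  \sum_(i < N) wedge (fun y => xq y i * xp y i) (fun y => sqp (xq y) (xp y)) c j d k x = 0.
Proof. by rewrite /wedge sumrB -!mulr_suml -!partial_sqp mulrC subrr. Qed.

Section RtauTwoForm.
Variables (K : numFieldType) (N : nat) (k0 k1 kinf : K) (th : 'I_N -> K) (x : pt K N).
Hypothesis s_neq0 : forall i, xs x i != 0.
Hypothesis s_neq1 : forall i, xs x i != 1.
Hypothesis s_inj : forall i j, i != j -> xs x i != xs x j.
Hypothesis alpha_neq0 : galpha k0 k1 kinf th + sqp (xq x) (xp x) != 0.
Hypothesis alpha_kinf_neq0 : galpha k0 k1 kinf th + kinf + sqp (xq x) (xp x) != 0.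
Hypothesis p_neq0 : forall i, xp x i != 0.
Hypothesis qp_neq_th : forall i, xq x i * xp x i != th i.

Local Notation qf i := (fun y : pt K N => xq y i).
Local Notation pf i := (fun y : pt K N => xp y i).
Local Notation sf i := (fun y : pt K N => xs y i).
Local Notation uf i := (fun y : pt K N => xq y i * xp y i).
Local Notation Sf := (fun y : pt K N => sqp (xq y) (xp y)).
Local Notation Qf i := (fun y : pt K N => Qtau k0 k1 kinf th (xq y) (xp y) (xs y) i).
Local Notation Pf i := (fun y : pt K N => Ptau k0 k1 kinf th (xq y) (xp y) (xs y) i).
Local Notation Hf i := (fun y : pt K N => Ham k0 k1 kinf th (xq y) (xp y) (xs y) i).
Local Notation Htf i := (fun y : pt K N => Htilde k0 k1 kinf th (xq y) (xp y) (xs y) i).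
Local Notation A := (galpha k0 k1 kinf th + sqp (xq x) (xp x)).
Local Notation B := (galpha k0 k1 kinf th + kinf + sqp (xq x) (xp x)).
Local Notation Q i := (Qtau k0 k1 kinf th (xq x) (xp x) (xs x) i).
Local Notation D F c j := (partial F c j x).

Let v_neq0 i : xq x i * xp x i - th i != 0.
Proof. by rewrite subr_eq0. Qed.

Let Q_neq0 i : Q i != 0.
Proof. exact: Qtau_neq0. Qed.

Lemma is_partial_Ham c j i : is_partial x c j (Hf i) (D (Hf i) c j).
Proof.
have [dH dHx] : exists dH, is_partial x c j (Hf i) dH.
  by eexists; rewrite /Ham /hnum /Rg /Sg; is_partial_rules;
    rewrite /= ?mulf_neq0 ?subr_eq0 ?s_inj // eq_sym.
exact: is_partial_partial dHx.
Qed.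

Definition dlogQtau c j i :=
  D (sf i) c j / xs x i + D (pf i) c j / xp x i
  + D (uf i) c j / (xq x i * xp x i - th i) - (A^-1 + B^-1) * D Sf c j.

Lemma is_partial_Qtau c j i : is_partial x c j (Qf i) (Q i * dlogQtau c j i).
Proof.
apply: is_partial_eq.
  by rewrite /Qtau; is_partial_rules; rewrite /= mulf_neq0.
rewrite /dlogQtau partial_qp /Qtau.
by field; rewrite alpha_neq0 alpha_kinf_neq0 s_neq0 p_neq0 v_neq0.
Qed.

Lemma partial_Ptau c j i :
  D (Pf i) c j = (xq x i * xp x i * dlogQtau c j i - D (uf i) c j) / Q i.
Proof.
apply: is_partial_val; apply: is_partial_eq.
  have dQ := is_partial_Qtau c j i.
  by rewrite /Ptau; is_partial_rules; apply: Q_neq0.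
rewrite partial_qp.
by field; rewrite Q_neq0.
Qed.

Lemma partial_Htilde c j i :
  D (Htf i) c j = D (Hf i) c j
    - (D (uf i) c j / xs x i - xq x i * xp x i * D (sf i) c j / xs x i ^+ 2).
Proof.
apply: is_partial_val; apply: is_partial_eq.
  have dH := is_partial_Ham c j i.
  by rewrite /Htilde; is_partial_rules; rewrite /= s_neq0.
rewrite partial_qp.
by field; rewrite s_neq0.
Qed.

Lemma wedge_Rtau c j d k i :
  wedge (Pf i) (Qf i) c j d k x - wedge (Htf i) (sf i) c j d k x
  = wedge (pf i) (qf i) c j d k x - wedge (Hf i) (sf i) c j d k x
    + (A^-1 + B^-1) * wedge (uf i) Sf c j d k x.
Proof.
have wedge_PQ : wedge (Pf i) (Qf i) c j d k x
    = D (uf i) d k * dlogQtau c j i - D (uf i) c j * dlogQtau d k i.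
  rewrite /wedge !partial_Ptau !(is_partial_val (is_partial_Qtau _ _ _)).
  by field; rewrite Q_neq0.
rewrite wedge_PQ /wedge !partial_Htilde /dlogQtau !partial_qp.
by field; rewrite alpha_neq0 alpha_kinf_neq0 s_neq0 p_neq0 v_neq0.
Qed.

Lemma sum_wedge_Rtau c j d k :
  \sum_(i < N) (wedge (pf i) (qf i) c j d k x - wedge (Hf i) (sf i) c j d k x)
  = \sum_(i < N) (wedge (Pf i) (Qf i) c j d k x - wedge (Htf i) (sf i) c j d k x).
Proof.
rewrite [RHS](eq_bigr _ (fun i _ => wedge_Rtau c j d k i)) [RHS]big_split /=.
by rewrite -mulr_sumr sum_wedge_sqp mulr0 addr0.
Qed.
End RtauTwoForm.

Unset Implicit Arguments.
(* The 2-form identity (i) is stated componentwise, on each pair of coordinate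
   vectors of (q,p,s)-space, at points where all the rational functions involved
   are defined. *)
Theorem theorem1p3 (R : realType) (N : nat)
    (k0 k1 kinf : R[i]) (th : 'I_N -> R[i]) (x : pt R[i] N) :
  (forall i, xs x i != 0) ->
  (forall i, xs x i != 1) ->
  (forall i j, i != j -> xs x i != xs x j) ->
  galpha k0 k1 kinf th + sqp (xq x) (xp x) != 0 ->
  galpha k0 k1 kinf th + kinf + sqp (xq x) (xp x) != 0 ->
  (forall i, xp x i != 0) ->
  (forall i, xq x i * xp x i != th i) ->
  (* (i) equality of the 2-forms *)
  (forall (c : 'I_3) (j : 'I_N) (d : 'I_3) (k : 'I_N),
     \sum_(i < N)
        (wedge (fun y => xp y i) (fun y => xq y i) c j d k x
         - wedge (fun y => Ham k0 k1 kinf th (xq y) (xp y) (xs y) i)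
                 (fun y => xs y i) c j d k x)
   = \sum_(i < N)
        (wedge (fun y => Ptau k0 k1 kinf th (xq y) (xp y) (xs y) i)
               (fun y => Qtau k0 k1 kinf th (xq y) (xp y) (xs y) i) c j d k x
         - wedge (fun y => Htilde k0 k1 kinf th (xq y) (xp y) (xs y) i)
                 (fun y => xs y i) c j d k x))
  /\
  (* (ii) tilde H_i = H_i(Q, P, s; R_tau(kappa)) *)
  (forall i : 'I_N,
     Htilde k0 k1 kinf th (xq x) (xp x) (xs x) i
     = Ham (1 - k0) (1 - k1) (- kinf) (fun j => - th j)
           (Qtau k0 k1 kinf th (xq x) (xp x) (xs x))
           (Ptau k0 k1 kinf th (xq x) (xp x) (xs x)) (xs x) i).
Proof.
move=> s_neq0 s_neq1 s_inj alpha_neq0 alpha_kinf_neq0 p_neq0 qp_neq_th.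
split=> [c j d k | i].
  exact: sum_wedge_Rtau.
exact: Htilde_Rtau.
Qed.
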